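(* Let $f$ be a complex polynomial of degree $d$ with $f(0)\neq 0$, with roots $\zeta_1,\dots,\zeta_d$ (counted with multiplicity) ordered so that $|\zeta_1|\le\cdots\le|\zeta_d|$, and assume not all roots have the same modulus. Let $\rho=\min\{|\zeta_{i+1}|/|\zeta_i| : |\zeta_{i+1}|>|\zeta_i|\}$. Let $N$ be a positive integer with \[ N > 3+\log_2\frac{d\log 2}{\log\rho}, \] let $g=G^Nf=\sum_{i=0}^d g_ix^i$ and $r_i=-2^{-N}\log|g_i|\in\mathbb{R}\cup\{+\infty\}$ for $i=0,\dots,d$. Then the Strict Convex Hull procedure (described in the context) with input $N,d,r=(r_0,\dots,r_d),\rho$ returns exactly the increasing list of the elements of \[ I=\{0,d\}\cup\{i : 1\le i\le d-1,\ |\zeta_i|<|\zeta_{i+1}|\}, \] i.e. the abscissae of the sharp corners of the convex piecewise linear function on $[0,d]$ interpolating $i\mapsto\sum_{j\le i}\log|\zeta_j|$.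
   Context: $\log$ is the natural logarithm. The Graeffe operator maps a degree $d$ polynomial $f$ to $Gf(x)=(-1)^d f(\sqrt{x})f(-\sqrt{x})$, again a degree $d$ polynomial (whose roots are the squares of those of $f$); $G^N$ is its $N$-th iterate. Usual conventions for $+\infty$ are used in comparisons and arithmetic. Strict Convex Hull procedure, input $N,d,r_0,\dots,r_d,\rho$: set $R=\rho^{2^N}$ and \[ E=\tfrac12\Big(2^{-N+1}\log(2^d+2^dR^{-1})-2^{-N+2}\log(1-2^dR^{-1})+\tfrac{\log\rho}{2}\Big). \] Initialize a list with $\Lambda_0=0$ and $j=0$. For $i=1,2,\dots,d$ in turn: while $j>0$ and \[ \frac{r_{\Lambda_j}-r_{\Lambda_{j-1}}}{\Lambda_j-\Lambda_{j-1}} > \frac{r_i-r_{\Lambda_j}}{i-\Lambda_j}-E, \] set $j\leftarrow j-1$ (discarding $\Lambda_j$); then set $j\leftarrow j+1$ and $\Lambda_j\leftarrow i$. After the loop, return $(\Lambda_0,\dots,\Lambda_j)$. *)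

From HB Require Import structures.
From mathcomp Require Import all_boot all_order all_algebra.
From mathcomp Require Import complex.
From mathcomp Require Import all_classical all_reals all_analysis.
Set Implicit Arguments.
Unset Strict Implicit.
Unset Printing Implicit Defensive.
Import Order.TTheory GRing.Theory Num.Theory.
Local Open Scope ring_scope.

Definition cmod {R : realType} (z : R[i]) : R := ComplexField.Normc.normc z.

(* Graeffe operator: G f (x) = (-1)^d f(sqrt x) f(-sqrt x), d = deg f.
   Writing f(x) = E(x^2) + x O(x^2) (E = even_poly f, O = odd_poly f),
   f(sqrt x) f(-sqrt x) = E(x)^2 - x O(x)^2. *)
Definition graeffe {R : realType} (f : {poly R[i]}) : {poly R[i]} :=
  (-1) ^+ (size f).-1 *: (even_poly f ^+ 2 - 'X * odd_poly f ^+ 2).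

Local Open Scope ereal_scope.

Definition sch_test {R : realType} (r : nat -> \bar R) (E : R)
    (b a i : nat) : bool :=
  ((r i - r a) * (((i - a)%:R : R)^-1)%:E - E%:E <
     (r a - r b) * (((a - b)%:R : R)^-1)%:E).

(* the while loop; the stack is stored with Lambda_j at its head,
   so "j > 0" means the stack has at least two elements *)
Fixpoint sch_pop {R : realType} (r : nat -> \bar R) (E : R) (i : nat)
    (st : seq nat) : seq nat :=
  match st with
  | a :: ((b :: _) as rest) =>
      if sch_test r E b a i then sch_pop r E i rest else st
  | _ => st
  end.

Definition sch_step {R : realType} (r : nat -> \bar R) (E : R)
    (st : seq nat) (i : nat) : seq nat :=
  i :: sch_pop r E i st.

Local Close Scope ereal_scope.

Definition sch_E {R : realType} (N d : nat) (rho : R) : R :=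
  let Rr := rho ^+ (2 ^ N) in
  2^-1 * (2 ^- N * 2 * ln (2 ^+ d + 2 ^+ d * Rr^-1)
          - 2 ^- N * 4 * ln (1 - 2 ^+ d * Rr^-1)
          + ln rho / 2).

Definition strict_convex_hull {R : realType} (N d : nat)
    (r : nat -> \bar R) (rho : R) : seq nat :=
  rev (foldl (sch_step r (sch_E N d rho)) [:: 0%N] (iota 1 d)).

(* After N Graeffe steps, g = c^(2^N) prod_k (X - zeta_k^(2^N)), so |g_k| is |c|^(2^N)
   times the modulus of the elementary symmetric function e_(d-k) of the roots
   w_k = zeta_(k+1)^(2^N), which are sorted by modulus. Every term of e_(d-k) is at most
   the product D_k of the d-k largest |w_i|, and when k is a corner (|zeta_k| < |zeta_(k+1)|)
   every other term is smaller by a factor rho^(-2^N). Hence r_k stays within eps of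
   L_k = -log|c| - sum_(j>k) log|zeta_j| at the corners and above L_k - del elsewhere,
   with eps, del = O(2^(-N)). L is affine between consecutive corners and its slope jumps
   by at least log rho at each corner. Around a non-corner the two chords of r differ by
   at most 2(del + eps) < E, so it is popped when the next corner is read, whereas around a
   corner they differ by at least log rho - del - 4 eps >= E, so corners are never popped;
   the bound on N makes both inequalities hold. *)

From HB Require Import structures.
From mathcomp Require Import all_boot all_order all_algebra.
From mathcomp Require Import complex.
From mathcomp Require Import all_classical all_reals all_analysis.
From mathcomp Require Import lra ring zify.
Import Order.TTheory GRing.Theory Num.Theory.
Local Open Scope ring_scope.

Section ComplexModulus.
Context {R : realType}.
Local Notation C := R[i].

Lemma cmod0 : cmod (0 : C) = 0. Proof. exact: ComplexField.Normc.normc0. Qed.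
Lemma cmod1 : cmod (1 : C) = 1. Proof. exact: ComplexField.Normc.normc1. Qed.
Lemma cmodM (x y : C) : cmod (x * y) = cmod x * cmod y.
Proof. exact: ComplexField.Normc.normcM. Qed.
Lemma cmodN (x : C) : cmod (- x) = cmod x. Proof. exact: normcN. Qed.
Lemma ler_cmodD (x y : C) : cmod (x + y) <= cmod x + cmod y. Proof. exact: le_normcD. Qed.

Lemma cmod_ge0 (x : C) : 0 <= cmod x.
Proof. by case: x => a b; rewrite /cmod /= sqrtr_ge0. Qed.

Lemma cmod_gt0 (x : C) : (0 < cmod x) = (x != 0).
Proof.
rewrite lt_neqAle cmod_ge0 andbT eq_sym; apply/idP/idP; apply: contra => /eqP.
  by move=> ->; rewrite cmod0.
by move/ComplexField.Normc.eq0_normc => ->.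
Qed.

Lemma cmod_prod (I : Type) (r : seq I) (P : pred I) (F : I -> C) :
  cmod (\prod_(i <- r | P i) F i) = \prod_(i <- r | P i) cmod (F i).
Proof. exact: (big_morph _ cmodM cmod1). Qed.

Lemma cmodX (x : C) n : cmod (x ^+ n) = cmod x ^+ n.
Proof. by elim: n => [|n IH]; rewrite ?cmod1 // !exprS cmodM IH. Qed.

Lemma ler_cmod_sum (I : Type) (r : seq I) (P : pred I) (F : I -> C) :
  cmod (\sum_(i <- r | P i) F i) <= \sum_(i <- r | P i) cmod (F i).
Proof.
elim/big_rec2: _ => [|i y1 y2 _ h]; first by rewrite cmod0.
by apply: le_trans (ler_cmodD _ _) _; rewrite lerD2l.
Qed.

End ComplexModulus.

Section EvenOddSquares.
Variable K : comNzRingType.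

Lemma comp_polyX2_inj : injective (comp_poly ('X^2 : {poly K})).
Proof.
move=> p q /(congr1 (fun r : {poly K} => r`_(2 * _)))/= pq; apply/polyP => i.
by have := pq i; rewrite !coef_comp_poly_Xn // dvdn_mulr // mulKn.
Qed.

Lemma comp_poly_oppX (f : {poly K}) :
  f \Po - 'X = even_poly f \Po 'X^2 - (odd_poly f \Po 'X^2) * 'X.
Proof.
have X2N : ('X^2 : {poly K}) \Po - 'X = 'X^2 by rewrite comp_Xn_poly sqrrN.
rewrite -{1}(poly_even_odd f) comp_polyD comp_polyM comp_polyX -!comp_polyA X2N.
by rewrite mulrN.
Qed.

Lemma even_odd_sqr_comp_X2 (f : {poly K}) :
  (even_poly f ^+ 2 - 'X * odd_poly f ^+ 2) \Po 'X^2 = f * (f \Po - 'X).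
Proof.
rewrite comp_poly_oppX comp_polyB rmorphXn /= comp_polyM comp_polyX rmorphXn /=.
have := poly_even_odd f.
set A := even_poly f \Po 'X^2; set B := odd_poly f \Po 'X^2 => <-; ring.
Qed.

Lemma comp_prod_XsubC_oppX (s : seq K) :
  (\prod_(z <- s) ('X - z%:P)) \Po - 'X = (-1) ^+ size s *: \prod_(z <- s) ('X + z%:P).
Proof.
elim: s => [|z s IH]; first by rewrite !big_nil comp_polyC scale1r.
rewrite !big_cons comp_polyM IH comp_polyB comp_polyX comp_polyC -opprD mulNr.
by rewrite -scalerAr exprS -scalerA scaleN1r.
Qed.

End EvenOddSquares.

Section GraeffeRoots.
Context {R : realType}.
Local Notation C := R[i].

Lemma graeffe_scale_prod (c : C) (s : seq C) : c != 0 ->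
  graeffe (c *: \prod_(z <- s) ('X - z%:P)) = c ^+ 2 *: \prod_(z <- s) ('X - (z ^+ 2)%:P).
Proof.
move=> c0; apply: comp_polyX2_inj => /=.
rewrite /graeffe size_scale // size_prod_XsubC /= comp_polyZ even_odd_sqr_comp_X2.
rewrite comp_polyZ comp_prod_XsubC_oppX comp_polyZ rmorph_prod /=.
have -> : \prod_(z <- s) (('X - (z ^+ 2)%:P) \Po 'X^2) =
          \prod_(z <- s) ('X - z%:P) * \prod_(z <- s) ('X + z%:P).
  rewrite -big_split; apply: eq_bigr => z _ /=.
  by rewrite comp_polyB comp_polyX comp_polyC rmorphXn subr_sqr.
rewrite -scalerAl -!scalerAr !scalerA; congr (_ *: _).
(* The sign in the definition of [graeffe] cancels the one coming from [f \Po - 'X]. *)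
have : ((-1) ^+ size s) ^+ 2 = 1 :> C by rewrite -exprM mulnC exprM sqrrN !expr1n.
by set sg := (-1) ^+ size s => sg2; rewrite -[c ^+ 2]mul1r -sg2; ring.
Qed.

Lemma iter_graeffe_scale_prod N (c : C) (s : seq C) : c != 0 ->
  iter N graeffe (c *: \prod_(z <- s) ('X - z%:P)) =
  c ^+ (2 ^ N) *: \prod_(z <- [seq z ^+ (2 ^ N) | z <- s]) ('X - z%:P).
Proof.
move=> c0; elim: N => [|N IH].
  by rewrite big_map expn0 expr1; congr (_ *: _); apply: eq_bigr => z _; rewrite expr1.
rewrite iterS IH graeffe_scale_prod ?expf_neq0 // !big_map -exprM -expnSr.
by congr (_ *: _); apply: eq_bigr => z _; rewrite -exprM -expnSr.
Qed.

End GraeffeRoots.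

Definition top_set (n k : nat) : {set 'I_n} := [set i : 'I_n | (k <= i)%N].

Lemma card_top_set n k : (k <= n)%N -> #|top_set n k| = (n - k)%N.
Proof.
move=> kn; rewrite cardsE -sum1_card -[RHS]muln1 -sum_nat_const_nat big_geq_mkord.
by apply: eq_bigl.
Qed.

Section TopSubsetProducts.
Context {R : numDomainType} {n : nat} {u : nat -> R}.
Hypothesis u_gt0 : forall i, (i < n)%N -> 0 < u i.
Hypothesis u_mono : forall i j, (i <= j)%N -> (j < n)%N -> u i <= u j.

Let u_ge0 i : (i < n)%N -> 0 <= u i.
Proof. by move/u_gt0/ltW. Qed.

(* Exchange argument: [I] trades the elements of [top_set n k :\: I], all at least [u k],
   for as many elements of [I :\: top_set n k], all at most [u k.-1], and there is one. *)
Lemma prod_le_top_set_gap {k} {I : {set 'I_n}} : (0 < k < n)%N ->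
  #|I| = #|top_set n k| -> I != top_set n k ->
  \prod_(i in I) u i * u k <= \prod_(i in top_set n k) u i * u k.-1.
Proof.
move=> /andP[k_gt0 kn] cardI neqI.
rewrite (big_setID (top_set n k)) [X in _ <= X * _](big_setID I) /= finset.setIC.
set A := I :\: top_set n k; set B := top_set n k :\: I; set M := top_set n k :&: I.
have cardAB : #|A| = #|B|.
  have := cardsID (top_set n k) I; have := cardsID I (top_set n k).
  by rewrite [I :&: _]finset.setIC -/A -/B -/M; lia.
have A_gt0 : (0 < #|A|)%N.
  rewrite lt0n cards_eq0; apply: contra neqI => /eqP A0.
  by rewrite eqEcard cardI leqnn andbT -finset.setD_eq0 -/A A0.
have k1n : (k.-1 < n)%N by lia.
have prodA : \prod_(i in A) u i <= u k.-1 ^+ #|A|.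
  rewrite -prodr_const; apply: ler_prod => i; rewrite !inE -ltnNge => /andP[ik _].
  by rewrite u_ge0 //= u_mono //; lia.
have prodB : u k ^+ #|B| <= \prod_(i in B) u i.
  rewrite -prodr_const; apply: ler_prod => i; rewrite !inE => /andP[_ ki].
  by rewrite u_ge0 //= u_mono.
have M_ge0 : 0 <= \prod_(i in M) u i by apply: prodr_ge0 => i _; apply: u_ge0.
rewrite -!mulrA; apply: ler_wpM2l => //.
move: cardAB A_gt0 prodA prodB; case: #|A| => // a <- _ prodA prodB.
apply: (le_trans (ler_wpM2r (u_ge0 k kn) prodA)).
apply: (le_trans _ (ler_wpM2r (u_ge0 _ k1n) prodB)).
rewrite !exprSr -!mulrA; apply: ler_pM.
- exact/exprn_ge0/u_ge0.
- by rewrite mulr_ge0 ?u_ge0.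
- by rewrite lerXn2r ?nnegrE ?u_ge0 // u_mono //; lia.
- by rewrite mulrC.
Qed.

Lemma prod_le_top_set k (I : {set 'I_n}) : #|I| = #|top_set n k| ->
  \prod_(i in I) u i <= \prod_(i in top_set n k) u i.
Proof.
move=> cardI; have [->//|neqI] := eqVneq I (top_set n k).
have [k0|k_gt0] := posnP k.
  move/negP: neqI; case; rewrite eqEcard cardI leqnn andbT.
  by apply/fintype.subsetP => i _; rewrite inE k0.
have [kn|nk] := ltnP k n; last first.
  move/negP: neqI; case; rewrite eq_sym eqEcard cardI leqnn andbT.
  by apply/fintype.subsetP => i; rewrite inE => ki; move: (ltn_ord i); lia.
have k_mid : (0 < k < n)%N by rewrite k_gt0 kn.
rewrite -(ler_pM2r (u_gt0 k kn)).
apply: (le_trans (prod_le_top_set_gap k_mid cardI neqI)); apply: ler_wpM2l.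
  by apply: prodr_ge0 => i _; apply: u_ge0.
by apply: u_mono; lia.
Qed.

End TopSubsetProducts.

Definition elementary_sym {K : comNzRingType} (w : seq K) (m : nat) : K :=
  \sum_(I in {set 'I_(size w)} | #|I| == m) \prod_(i in I) w`_i.

Lemma coef_scale_prod_XsubC {K : comNzRingType} (c : K) (w : seq K) k : (k <= size w)%N ->
  (c *: \prod_(z <- w) ('X - z%:P))`_k = c * ((-1) ^+ (size w - k) * elementary_sym w (size w - k)).
Proof. by move=> kw; rewrite coefZ coef_prod_XsubC. Qed.

Section ElementarySymmetricBounds.
Context {R : realType}.
Variable w : seq R[i].
Hypothesis w_neq0 : forall i, (i < size w)%N -> w`_i != 0.
Hypothesis w_sorted : forall i j, (i <= j)%N -> (j < size w)%N -> cmod w`_i <= cmod w`_j.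

Local Notation n := (size w).

Definition top_prod k := \prod_(i in top_set n k) w`_i.

Let cmodw_gt0 i : (i < n)%N -> 0 < cmod w`_i.
Proof. by move=> i_lt; rewrite cmod_gt0 w_neq0. Qed.

Lemma cmod_top_prod_gt0 k : 0 < cmod (top_prod k).
Proof. by rewrite cmod_prod; apply: prodr_gt0 => i _; apply: cmodw_gt0. Qed.

Lemma sum_subsets_le (P : pred {set 'I_n}) (F : {set 'I_n} -> R) (D : R) :
  0 <= D -> (forall I, P I -> F I <= D) -> \sum_(I | P I) F I <= 2 ^+ n * D.
Proof.
move=> D_ge0 FD; apply: le_trans (ler_sum _ FD) _.
apply: (@le_trans _ _ (\sum_(I : {set 'I_n}) D)).
  by rewrite [X in _ <= X](bigID P) /= lerDl sumr_ge0.
rewrite sumr_const -cardsT -powersetT card_powerset cardsT card_ord.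
by rewrite -[D *+ _]mulr_natl natrX.
Qed.

Lemma cmod_elementary_sym_le k : (k <= n)%N ->
  cmod (elementary_sym w (n - k)) <= 2 ^+ n * cmod (top_prod k).
Proof.
move=> kn; apply: le_trans (ler_cmod_sum _ _ _ _) _.
apply: sum_subsets_le => [|I /andP[_ /eqP cardI]]; first exact/ltW/cmod_top_prod_gt0.
rewrite !cmod_prod; apply: (prod_le_top_set cmodw_gt0 w_sorted).
by rewrite cardI card_top_set.
Qed.

Lemma cmod_elementary_sym_sub_top_le k : (0 < k < n)%N ->
  cmod (elementary_sym w (n - k) - top_prod k) <=
  2 ^+ n * (cmod (top_prod k) * (cmod w`_k.-1 / cmod w`_k)).
Proof.
move=> k_mid; have /andP[_ kn] := k_mid.
have card_top : #|top_set n k| = (n - k)%N by rewrite card_top_set // ltnW.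
rewrite /elementary_sym (bigD1 (top_set n k)) /=; last by rewrite card_top eqxx.
rewrite addrAC subrr add0r; apply: le_trans (ler_cmod_sum _ _ _ _) _.
apply: sum_subsets_le => [|I /andP[/eqP cardI neqI]].
  by rewrite mulr_ge0 ?divr_ge0 ?cmod_ge0.
rewrite mulrA ler_pdivlMr ?cmodw_gt0 // !cmod_prod.
apply: (prod_le_top_set_gap cmodw_gt0 w_sorted) => //.
by rewrite cardI card_top.
Qed.

Lemma elementary_sym_top_edge k : (k == 0%N) || (k == n) -> elementary_sym w (n - k) = top_prod k.
Proof.
move=> k_edge; have kn : (k <= n)%N by case/orP: k_edge => /eqP ->.
rewrite /elementary_sym (big_pred1 (top_set n k)) // => I /=; rewrite -card_top_set //.
apply/idP/eqP => [/eqP cardI|->//]; apply/eqP.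
case/orP: k_edge => /eqP k_eq; subst k.
  by rewrite eqEcard cardI leqnn andbT; apply/fintype.subsetP => i; rewrite inE.
rewrite eq_sym eqEcard cardI leqnn andbT; apply/fintype.subsetP => i.
by rewrite inE => ni; move: (ltn_ord i); rewrite ltnNge ni.
Qed.

End ElementarySymmetricBounds.

Arguments cmod_elementary_sym_le {R w}.
Arguments cmod_elementary_sym_sub_top_le {R w}.

Section LogBounds.
Context {R : realType}.

Lemma ln_prod (I : Type) (r : seq I) (P : pred I) (F : I -> R) :
  (forall i, P i -> 0 < F i) ->
  ln (\prod_(i <- r | P i) F i) = \sum_(i <- r | P i) ln (F i).
Proof.
move=> F_gt0; elim: r => [|x r IH]; first by rewrite !big_nil ln1.
rewrite !big_cons; case: ifP => // Px.
by rewrite lnM ?posrE ?IH ?F_gt0 // prodr_gt0.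
Qed.

Lemma oppr_ln1B_le (th : R) : 0 < th <= 1 / 2 -> - ln (1 - th) <= 2 * th.
Proof.
move=> /andP[th_gt0 th_le].
have q_ge0 : 0 <= th / (1 - th) by apply: divr_ge0; lra.
have q_gt : -1 < th / (1 - th) by apply: lt_le_trans q_ge0; rewrite oppr_lt0.
have := le_ln1Dx q_gt.
have -> : 1 + th / (1 - th) = (1 - th)^-1 by field; lra.
rewrite lnV ?posrE; last lra.
by move/le_trans; apply; rewrite ler_pdivrMr; nra.
Qed.

Lemma ln_cmod_close {z p : R[i]} {th : R} : p != 0 -> 0 < th <= 1 / 2 ->
  cmod (z - p) <= th * cmod p ->
  z != 0 /\ `|ln (cmod p) - ln (cmod z)| <= - ln (1 - th).
Proof.
move=> p_neq0 /andP[th_gt0 th_le] zp.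
have p_gt0 : 0 < cmod p by rewrite cmod_gt0.
have zup : cmod z <= cmod p * (1 + th).
  by have := ler_cmodD p (z - p); rewrite addrC subrK; lra.
have zlo : cmod p * (1 - th) <= cmod z.
  have := ler_cmodD z (p - z); rewrite addrC subrK -opprB cmodN; nra.
have z_gt0 : 0 < cmod z by apply: lt_le_trans zlo; rewrite mulr_gt0 //; lra.
split; first by rewrite -cmod_gt0.
have lo : ln (cmod p) + ln (1 - th) <= ln (cmod z).
  by rewrite -lnM ?posrE ?ler_ln ?posrE ?mulr_gt0 //; lra.
have up : ln (cmod z) <= ln (cmod p) + ln (1 + th).
  by rewrite -lnM ?posrE ?ler_ln ?posrE ?mulr_gt0 //; lra.
have : ln (1 + th) + ln (1 - th) <= 0.
  by rewrite -lnM ?posrE; [apply: ln_le0; nra | lra | lra].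
rewrite ler_norml; move: lo up; lra.
Qed.

End LogBounds.

Section GraeffeMargins.
Context {R : realType}.

Lemma ln2_ge_half : 1 / 2 <= ln (2 : R).
Proof.
have half_gt : -1 < - (1 / 2) :> R by lra.
have := le_ln1Dx half_gt.
have -> : 1 + - (1 / 2) = 2^-1 :> R by field.
by rewrite lnV ?posrE //; lra.
Qed.

Lemma ln_rho_gt_of_steps (d N : nat) (rho : R) : (1 <= d)%N -> 1 < rho ->
  3 + ln (d%:R * ln 2 / ln rho) / ln 2 < N%:R -> 8 * (d%:R * ln 2) < 2 ^+ N * ln rho.
Proof.
move=> d_ge1 rho_gt1 N_gt.
have ln2_gt0 : 0 < ln (2 : R) by rewrite ln_gt0 // ltr1n.
have lnrho_gt0 : 0 < ln rho by rewrite ln_gt0.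
have x_gt0 : 0 < d%:R * ln 2 / ln rho by rewrite divr_gt0 ?mulr_gt0 // ltr0n.
have : 8 * (d%:R * ln 2 / ln rho) < 2 ^+ N.
  rewrite -ltr_ln ?posrE ?exprn_gt0 ?(mulr_gt0 _ x_gt0) //.
  have -> : 8 = 2 ^+ 3 :> R by rewrite -natrX.
  rewrite lnM ?posrE // !lnXn // -!(mulr_natl (ln 2)).
  by move: N_gt; rewrite -(ltr_pM2r ln2_gt0) mulrDl divfK ?gt_eqF //; lra.
by rewrite mulrA ltr_pdivrMr.
Qed.

Lemma error_logs_small (d : nat) (Rr : R) : (1 <= d)%N -> 2 ^+ (8 * d) < Rr ->
  let th := 2 ^+ d / Rr in
  [/\ 0 < th <= 1 / 2, 0 <= - ln (1 - th) <= 1 / 64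
    & 0 <= ln (2 ^+ d + 2 ^+ d / Rr) <= d%:R * ln 2 + 1 / 256].
Proof.
move=> d_ge1 Rr_gt th.
have d_pos : (0 : R) < 2 ^+ d by rewrite exprn_gt0.
have d2 : (2 : R) <= 2 ^+ d by rewrite -[X in X <= _]expr1 ler_eXn2l // ltr1n.
have pow8 : 128 * 2 ^+ d <= (2 : R) ^+ (8 * d).
  rewrite mulnC exprM exprSr; apply: ler_wpM2r; first exact: exprn_ge0.
  have -> : 128 = 2 ^+ 7 :> R by rewrite -natrX.
  by apply: lerXn2r; rewrite ?nnegrE //; lra.
have Rr_gt0 : 0 < Rr by apply: lt_trans Rr_gt; rewrite exprn_gt0.
have th_gt0 : 0 < th by rewrite divr_gt0.
have th_le : th <= 1 / 128 by rewrite ler_pdivrMr //; lra.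
have Rri_lt : Rr^-1 < 1 / 256 by rewrite -div1r ltr_pdivrMr // mulrC -ltr_pdivrMr //; lra.
have Rri_gt0 : 0 < Rr^-1 by rewrite invr_gt0.
have th_mid : 0 < th <= 1 / 2 by rewrite th_gt0 /=; lra.
split=> //; apply/andP; split.
- by rewrite oppr_ge0 ln_le0 // lerBlDr lerDl ltW.
- by have := oppr_ln1B_le _ th_mid; lra.
- have q_ge0 : 0 <= 2 ^+ d / Rr by rewrite divr_ge0 // ltW.
  by rewrite ln_ge0 //; lra.
rewrite -[X in ln (X + _)]mulr1 -mulrDr lnM ?posrE ?addr_gt0 //.
rewrite lnXn // -(mulr_natl (ln 2)) lerD2l.
have Rri_gtN1 : -1 < Rr^-1 by lra.
by have := le_ln1Dx Rri_gtN1; lra.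
Qed.

Lemma sch_E_margins (d N : nat) (rho : R) : (1 <= d)%N -> 1 < rho ->
  8 * (d%:R * ln 2) < 2 ^+ N * ln rho ->
  let Rr := rho ^+ (2 ^ N) in
  let th := 2 ^+ d / Rr in
  let eps := - (2 ^- N * ln (1 - th)) in
  let del := 2 ^- N * ln (2 ^+ d + 2 ^+ d / Rr) in
  [/\ 0 < th <= 1 / 2, 0 <= eps, 0 <= del, 2 * (del + eps) < sch_E N d rho
    & sch_E N d rho + del + 4 * eps <= ln rho].
Proof.
move=> d_ge1 rho_gt1 N_large Rr th eps del.
have ln2 := ln2_ge_half; have lnrho_gt0 : 0 < ln rho by rewrite ln_gt0.
have rho_gt0 : 0 < rho by apply: lt_trans rho_gt1.
have Q_gt0 : (0 : R) < 2 ^+ N by rewrite exprn_gt0.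
have Qi_gt0 : 0 < 2 ^- N :> R by rewrite invr_gt0.
have Rr_large : 2 ^+ (8 * d) < Rr.
  have pow_gt0 : 0 < 2 ^+ (8 * d) :> R by rewrite exprn_gt0.
  have Rr_gt0 : 0 < Rr by rewrite exprn_gt0.
  rewrite -ltr_ln ?posrE // !lnXn // -(mulr_natl (ln 2)) -(mulr_natl (ln rho)).
  by rewrite natrM natrX; lra.
have [th_mid /andP[eps'_ge0 eps'_le] /andP[del'_ge0 del'_le]] :=
  error_logs_small d Rr d_ge1 Rr_large.
have E_eq : sch_E N d rho = del + 2 * eps + ln rho / 4.
  by rewrite /sch_E /del /eps /th /Rr; field; rewrite gt_eqF.
have dln2 : 1 / 2 <= d%:R * ln (2 : R).
  by apply: (le_trans ln2); rewrite ler_peMl ?ler1n //; lra.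
have lnrho_gt : 8 * (d%:R * ln 2) * 2 ^- N < ln rho by rewrite ltr_pdivrMr // [ln rho * _]mulrC.
have del_lt : del < ln rho / 4.
  have := ler_wpM2l (ltW Qi_gt0) del'_le.
  have : 2 ^- N * (d%:R * ln 2 + 1 / 256) < 2 ^- N * (2 * (d%:R * ln 2)) :> R.
    by rewrite ltr_pM2l //; lra.
  rewrite /del; lra.
have eps_lt : 6 * eps <= ln rho / 4.
  have := ler_wpM2l (ltW Qi_gt0) eps'_le; have := ler_wpM2l (ltW Qi_gt0) dln2.
  rewrite /eps; lra.
have eps_ge0 : 0 <= eps by rewrite /eps -mulrN mulr_ge0 // ltW.
have del_ge0 : 0 <= del by rewrite mulr_ge0 // ltW.
by split => //; rewrite E_eq; lra.
Qed.

End GraeffeMargins.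

Section CornerLists.
Variable P : pred nat.

Definition consecutive (a c : nat) : Prop :=
  [/\ P a, P c, (a < c)%N & forall y, (a < y < c)%N -> ~~ P y].

(* The stack once the corner [a] has been read: the corners up to [a], latest on top. *)
Definition corners_upto (a : nat) : seq nat := rev [seq x <- iota 0 a.+1 | P x].

Lemma iota_rcons m n : iota m n.+1 = rcons (iota m n) (m + n)%N.
Proof. by rewrite -addn1 iotaD cats1. Qed.

Lemma filter_iota_gap a k : (a <= k)%N -> (forall y, (a < y <= k)%N -> ~~ P y) ->
  [seq x <- iota 0 k.+1 | P x] = [seq x <- iota 0 a.+1 | P x].
Proof.
elim: k => [|k IH] ak gap; first by move: ak; rewrite leqn0 => /eqP ->.
move: ak; rewrite leq_eqVlt => /predU1P[-> //|ak1].
rewrite iota_rcons filter_rcons /= (negbTE (gap k.+1 _)) ?ak1 ?leqnn //.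
by apply: IH => [|y /andP[ay yk]]; [|apply: gap]; lia.
Qed.

Lemma corners_upto0 : P 0 -> corners_upto 0 = [:: 0%N].
Proof. by rewrite /corners_upto /= => ->. Qed.

Lemma corners_uptoE a : P a -> corners_upto a = a :: rev [seq x <- iota 0 a | P x].
Proof. by move=> Pa; rewrite /corners_upto iota_rcons filter_rcons Pa rev_rcons. Qed.

Lemma cat_corners_upto a ps : P a -> exists st, ps ++ corners_upto a = head a ps :: st.
Proof. by case: ps => [|x ps] Pa /=; [rewrite corners_uptoE //|]; eexists. Qed.

Lemma corners_upto_consecutive {a c} : consecutive a c -> corners_upto c = c :: corners_upto a.
Proof.
case: c => [|c] [Pa Pc ac gap]; first by [].
by rewrite corners_uptoE // (@filter_iota_gap a c).
Qed.

Lemma last_corner_below a : P 0 -> (0 < a)%N ->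
  exists b, [/\ P b, (b < a)%N & forall y, (b < y < a)%N -> ~~ P y].
Proof.
move=> P0; elim: a => // a IH _.
have [Pa|nPa] := boolP (P a).
  by exists a; split=> // y /andP[ay ya]; move: ya; rewrite ltnS leqNgt ay.
have [a0|a_gt0] := posnP a; first by move: nPa; rewrite a0 P0.
have [b [Pb ba gap]] := IH a_gt0.
exists b; split=> [//||y /andP[yb ya]]; first exact: ltnW.
move: ya; rewrite ltnS leq_eqVlt => /predU1P[-> //|ya].
by apply: gap; rewrite yb ya.
Qed.

Lemma prev_corner a : P 0 -> P a -> (0 < a)%N ->
  exists b rest, consecutive b a /\ corners_upto a = [:: a, b & rest].
Proof.
move=> P0 Pa a_gt0; have [b [Pb ba gap]] := last_corner_below a P0 a_gt0.
have adj : consecutive b a by [].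
exists b, (rev [seq x <- iota 0 b | P x]); split => //.
by rewrite -corners_uptoE // -(corners_upto_consecutive adj).
Qed.

Lemma next_corner j d : P d -> (j <= d)%N ->
  exists c, [/\ (j <= c <= d)%N, P c & forall y, (j <= y < c)%N -> ~~ P y].
Proof.
move=> Pd jd; have exP : exists n, (j <= n)%N && P n by exists d; rewrite jd Pd.
case: (ex_minnP exP) => c /andP[jc Pc] cmin.
exists c; split => //; first by rewrite jc cmin ?jd.
move=> y /andP[jy yc]; apply/negP => Py.
by move: (cmin y); rewrite jy Py => /(_ isT); rewrite leqNgt yc.
Qed.

End CornerLists.

Lemma ler_slope_lower {R : realFieldType} (k s e D : R) :
  1 <= k -> 0 <= e -> k * s - e <= D -> s - e <= D / k.
Proof. by move=> k1 e0 h; rewrite ler_pdivlMr; [nra | lra]. Qed.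

Lemma ler_slope_upper {R : realFieldType} (k s e D : R) :
  1 <= k -> 0 <= e -> D <= k * s + e -> D / k <= s + e.
Proof. by move=> k1 e0 h; rewrite ler_pdivrMr; [nra | lra]. Qed.

Lemma sch_pop_cons2 {R : realType} (r : nat -> \bar R) E i x y st :
  sch_pop r E i [:: x, y & st] =
  if sch_test r E y x i then sch_pop r E i (y :: st) else [:: x, y & st].
Proof. by []. Qed.

Section StrictConvexHullCorrect.
Variables (R : realType) (d : nat) (r : nat -> \bar R) (E : R).
Variables (P : pred nat) (L t slope : nat -> R) (eps del lam : R).
Hypotheses (P0 : P 0%N) (Pd : P d).
Hypothesis r_corner : forall x, (x <= d)%N -> P x ->
  r x = (t x)%:E /\ `|t x - L x| <= eps.
Hypothesis r_off_corner : forall x, (x <= d)%N -> ~~ P x ->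
  r x = +oo%E \/ (r x = (t x)%:E /\ L x - del <= t x).
Hypothesis L_affine : forall a c x, consecutive P a c -> (c <= d)%N -> (a <= x <= c)%N ->
  L x = L a + (x - a)%:R * slope a.
Hypothesis slope_jump : forall b a c, consecutive P b a -> consecutive P a c -> (c <= d)%N ->
  slope b + lam <= slope a.
Hypotheses (eps_ge0 : 0 <= eps) (del_ge0 : 0 <= del).
Hypotheses (E_gt : 2 * (del + eps) < E) (E_le : E + del + 4 * eps <= lam).

Definition chord (y x : nat) := (t x - t y) / (x - y)%:R.

Lemma sch_test_fin {b a i} : r b = (t b)%:E -> r a = (t a)%:E -> r i = (t i)%:E ->
  sch_test r E b a i = (chord a i - E < chord b a).
Proof. by move=> rb ra ri; rewrite /sch_test rb ra ri -!EFinB -!EFinM lte_fin. Qed.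

Lemma sch_test_pinfty_mid {b a i} : r a = +oo%E -> r b = (t b)%:E -> (b < a < i)%N ->
  sch_test r E b a i.
Proof.
move=> ra rb /andP[ba ai]; rewrite /sch_test ra rb addeNy.
have ia_gt0 : (0 < ((i - a)%:R : R)^-1) by rewrite invr_gt0 ltr0n subn_gt0.
have ab_gt0 : (0 < ((a - b)%:R : R)^-1) by rewrite invr_gt0 ltr0n subn_gt0.
by rewrite gt0_mulNye ?lte_fin // addNye addye // gt0_mulye ?lte_fin.
Qed.

Lemma sch_test_pinfty_new {b a i} : r i = +oo%E -> r a = (t a)%:E -> r b = (t b)%:E ->
  (a < i)%N -> ~~ sch_test r E b a i.
Proof.
move=> ri ra rb ai; rewrite /sch_test ri ra rb addye //.
have ia_gt0 : (0 < ((i - a)%:R : R)^-1) by rewrite invr_gt0 ltr0n subn_gt0.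
by rewrite gt0_mulye ?lte_fin // addye.
Qed.

Lemma chord_from_corner {a c j} : consecutive P a c -> (c <= d)%N -> (a < j < c)%N ->
  r j = (t j)%:E -> slope a - (del + eps) <= chord a j.
Proof.
move=> adj cd ajc rj; have [Pa _ _ gap] := adj; have /andP[aj jc] := ajc.
have [jd ad] : (j <= d)%N /\ (a <= d)%N by lia.
have [|[_ tj]] := r_off_corner j jd (gap j ajc); first by rewrite rj.
have [_ ta] := r_corner a ad Pa.
rewrite (L_affine a c j adj cd) ?(ltnW aj) ?(ltnW jc) // in tj.
apply: ler_slope_lower; rewrite ?ler1n ?subn_gt0 //.
- by apply: addr_ge0.
- by move: ta; rewrite ler_norml => /andP[ta1 ta2]; lra.
Qed.

Lemma chord_to_corner {a c x} : consecutive P a c -> (c <= d)%N -> (a < x < c)%N ->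
  r x = (t x)%:E -> chord x c <= slope a + (del + eps).
Proof.
move=> adj cd axc rx; have [_ Pc _ gap] := adj; have /andP[ax xc] := axc.
have xd : (x <= d)%N by lia.
have [|[_ tx]] := r_off_corner x xd (gap x axc); first by rewrite rx.
have [_ tc] := r_corner c cd Pc.
rewrite (L_affine a c x adj cd) ?(ltnW ax) ?(ltnW xc) // in tx.
move: tc; rewrite (L_affine a c c adj cd) ?leqnn ?(ltnW (ltn_trans ax xc)) //.
rewrite ler_norml => /andP[_ tc].
have ca : (c - a)%:R = (c - x)%:R + (x - a)%:R :> R by rewrite -natrD; congr _%:R; lia.
rewrite ca in tc; rewrite /chord.
apply: ler_slope_upper; rewrite ?ler1n ?subn_gt0 //; first exact: addr_ge0.
lra.
Qed.

Lemma chord_corners {a c} : consecutive P a c -> (c <= d)%N ->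
  slope a - 2 * eps <= chord a c <= slope a + 2 * eps.
Proof.
move=> adj cd; have [Pa Pc ac _] := adj.
have [_ tc] := r_corner c cd Pc; have [_ ta] := r_corner a (ltnW (leq_trans ac cd)) Pa.
move: tc ta; rewrite (L_affine a c c adj cd) ?leqnn ?(ltnW ac) // !ler_norml.
move=> /andP[tc1 tc2] /andP[ta1 ta2]; have eps2 : 0 <= 2 * eps by lra.
have k1 : 1 <= (c - a)%:R :> R by rewrite ler1n subn_gt0.
apply/andP; split; [apply: ler_slope_lower | apply: ler_slope_upper] => //; lra.
Qed.

Lemma sch_pop_keeps_corners a c i : consecutive P a c -> (c <= d)%N -> (a < i <= c)%N ->
  r i = +oo%E \/ (r i = (t i)%:E /\ slope a - (del + 2 * eps) <= chord a i) ->
  sch_pop r E i (corners_upto P a) = corners_upto P a.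
Proof.
move=> adj_ac cd /andP[ai ic] hi; have [Pa _ ac _] := adj_ac.
have [a0|a_gt0] := posnP a; first by rewrite a0 corners_upto0.
have [b [rest [adj_ba ->]]] := prev_corner P a P0 Pa a_gt0.
have [Pb _ ba _] := adj_ba; have ad : (a <= d)%N by lia.
have [[ra _] [rb _]] := (r_corner a ad Pa, r_corner b (ltnW (leq_trans ba ad)) Pb).
rewrite sch_pop_cons2; case: hi => [ri|[ri ri_chord]].
  by rewrite (negbTE (sch_test_pinfty_new ri ra rb ai)).
rewrite sch_test_fin // ifN //; rewrite -leNgt.
have /andP[_ ba_chord] := chord_corners adj_ba ad.
have := slope_jump b a c adj_ba adj_ac cd; have := E_le; lra.
Qed.

(* The entries pushed since the last corner [a] are never reached with a slope much
   below that of [L] after [a]; this is what makes the next corner pop all of them. *)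
Fixpoint pending (a : nat) (ps : seq nat) : Prop :=
  if ps is x :: ps' then
    [/\ pending a ps', (head a ps' < x)%N, r (head a ps') = (t (head a ps'))%:E &
       r x = +oo%E \/ (r x = (t x)%:E /\ slope a - (del + eps) <= chord (head a ps') x)]
  else True.

Lemma pending_head {a ps} : pending a ps -> (a <= head a ps)%N.
Proof. by elim: ps => //= x ps IH [/IH ? hx _ _]; exact: leq_trans (ltnW hx). Qed.

Lemma sch_pop_off_corner {a c j ps} : consecutive P a c -> (c <= d)%N -> (a < j < c)%N ->
  pending a ps -> (head a ps < j)%N ->
  exists2 ps', sch_pop r E j (ps ++ corners_upto P a) = ps' ++ corners_upto P a
             & pending a (j :: ps').
Proof.
move=> adj cd ajc; have [Pa _ _ gap] := adj; have /andP[aj jc] := ajc.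
have rj : r j = +oo%E \/ (r j = (t j)%:E /\ slope a - (del + eps) <= chord a j).
  have jd : (j <= d)%N by lia.
  have [|[rj _]] := r_off_corner j jd (gap j ajc); [by left | right].
  by split=> //; apply: chord_from_corner adj cd ajc rj.
have ad : (a <= d)%N by lia.
have [ra _] := r_corner a ad Pa.
elim: ps => [_ _|x ps IH /= [pend hx rhd rx] xj].
  exists [::]; last by split.
  apply: (sch_pop_keeps_corners a c j adj cd); first by rewrite aj ltnW.
  by case: rj => [|[rj hj]]; [left | right; split=> //; have := eps_ge0; lra].
have [st e] := cat_corners_upto P a ps Pa; rewrite e -e.
case: ifP => test; first exact: IH pend (ltn_trans hx xj).
exists (x :: ps) => //.
have [{}rx hx_chord] : r x = (t x)%:E /\ slope a - (del + eps) <= chord (head a ps) x.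
  case: rx => // rx; move: test.
  by rewrite sch_test_pinfty_mid // hx xj.
have pend_x : pending a (x :: ps) by split=> //; right.
split => //; case: rj => [|[rj hj]]; [by left | right; split => //].
move: test; rewrite sch_test_fin // => /negbT; rewrite -leNgt.
have := E_gt; have := eps_ge0; have := del_ge0; lra.
Qed.

Lemma sch_pop_at_corner {a c ps} : consecutive P a c -> (c <= d)%N ->
  pending a ps -> (head a ps < c)%N ->
  sch_pop r E c (ps ++ corners_upto P a) = corners_upto P a.
Proof.
move=> adj cd; have [Pa Pc ac _] := adj.
have [rc _] := r_corner c cd Pc.
elim: ps => [_ _|x ps IH /= [pend hx rhd rx] xc].
  apply: (sch_pop_keeps_corners a c c adj cd); first by rewrite ac leqnn.
  have /andP[hc _] := chord_corners adj cd.
  by right; split=> //; have := del_ge0; lra.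
have ax : (a < x)%N := leq_ltn_trans (pending_head pend) hx.
have [st e] := cat_corners_upto P a ps Pa; rewrite e -e.
suff -> : sch_test r E (head a ps) x c by exact: IH pend (ltn_trans hx xc).
case: rx => [rx|[rx hx_chord]]; first by rewrite sch_test_pinfty_mid // hx xc.
rewrite sch_test_fin //.
have axc : (a < x < c)%N by rewrite ax xc.
have := chord_to_corner adj cd axc rx.
have := E_gt; lra.
Qed.

Definition sch_invariant (i : nat) (st : seq nat) : Prop :=
  exists a ps, [/\ P a, (a <= i)%N, forall y, (a < y <= i)%N -> ~~ P y,
                   st = ps ++ corners_upto P a & pending a ps /\ (head a ps <= i)%N].

Lemma sch_invariant_step i st : (i < d)%N -> sch_invariant i st ->
  sch_invariant i.+1 (sch_step r E st i.+1).
Proof.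
move=> id [a [ps [Pa ai gap -> [pend hd]]]]; rewrite /sch_step.
have [Pi|nPi] := boolP (P i.+1).
  have adj : consecutive P a i.+1.
    by split=> // y /andP[ay yi]; apply: gap; rewrite ay -ltnS.
  rewrite (sch_pop_at_corner adj id pend hd) -(corners_upto_consecutive P adj).
  exists i.+1, [::]; split=> //= y /andP[iy yi]; lia.
have [c [/andP[ic cd] Pc gapc]] := next_corner P i.+1 d Pd id.
have ic' : (i.+1 < c)%N by rewrite ltn_neqAle ic andbT; apply: contraNneq nPi => ->.
have adj : consecutive P a c.
  split=> // [|y /andP[ay yc]]; first lia.
  by case: (leqP y i) => yi; [apply: gap | apply: gapc]; rewrite ?ay ?yi.
have aic : (a < i.+1 < c)%N by rewrite ltnS ai.
have [ps' -> pend'] := sch_pop_off_corner adj cd aic pend hd.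
exists a, (i.+1 :: ps'); split=> //; first lia.
move=> y /andP[ay]; rewrite leq_eqVlt => /predU1P[->//|yi].
by apply: gap; rewrite ay -ltnS.
Qed.

Lemma sch_invariant_foldl i : (i <= d)%N ->
  sch_invariant i (foldl (sch_step r E) [:: 0%N] (iota 1 i)).
Proof.
elim: i => [_|i IH id].
  by exists 0%N, [::]; rewrite corners_upto0 //; split=> // y /andP[y0 y0']; lia.
by rewrite iota_rcons foldl_rcons add1n; apply: sch_invariant_step; last apply: IH; lia.
Qed.

Theorem sch_foldl_corners :
  rev (foldl (sch_step r E) [:: 0%N] (iota 1 d)) = [seq x <- iota 0 d.+1 | P x].
Proof.
have [a [ps [Pa ad gap -> [pend hd]]]] := sch_invariant_foldl d (leqnn d).
have ea : a = d.
  apply/eqP; rewrite eqn_leq ad leqNgt; apply/negP => da.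
  by move: (gap d); rewrite da leqnn Pd => /(_ isT).
subst a; case: ps pend hd => [|x ps] /=; first by rewrite /corners_upto revK.
by move=> [/pending_head h hx _ _] xd; lia.
Qed.

End StrictConvexHullCorrect.

Section GraeffeHull.
Variable R : realType.
Local Notation C := R[i].
Variables (d : nat) (f : {poly C}) (zeta : nat -> C) (rho : R) (N : nat).
Hypothesis size_f : size f = d.+1.
Hypothesis f0_neq0 : f.[0] != 0.
Hypothesis f_prod : f = lead_coef f *: \prod_(1 <= k < d.+1) ('X - (zeta k)%:P).
Hypothesis zeta_sorted : forall k, (1 <= k < d)%N -> cmod (zeta k) <= cmod (zeta k.+1).

Let lc := lead_coef f.
Let M := (2 ^ N)%N.
Let s := [seq zeta k | k <- iota 1 d].
Let w := [seq z ^+ M | z <- s].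

Lemma lead_coef_neq0 : lc != 0.
Proof. by rewrite lead_coef_eq0 -size_poly_eq0 size_f. Qed.

Lemma f_prod_seq : f = lc *: \prod_(z <- s) ('X - z%:P).
Proof. by rewrite {1}f_prod big_map /index_iota subSS subn0. Qed.

Lemma iter_graeffe_f : iter N graeffe f = lc ^+ M *: \prod_(z <- w) ('X - z%:P).
Proof. by rewrite {1}f_prod_seq iter_graeffe_scale_prod // lead_coef_neq0. Qed.

Lemma size_w : size w = d.
Proof. by rewrite !size_map size_iota. Qed.

Lemma nth_w i : (i < d)%N -> w`_i = zeta i.+1 ^+ M.
Proof.
move=> id; rewrite (nth_map 0) ?size_map ?size_iota //.
by rewrite (nth_map 0%N) ?size_iota // nth_iota // add1n.
Qed.

Lemma zeta_neq0 j : (1 <= j <= d)%N -> zeta j != 0.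
Proof.
move=> jd; apply: contra f0_neq0 => /eqP zj0.
rewrite f_prod_seq hornerZ horner_prod mulf_eq0 prodf_seq_eq0; apply/orP; right.
apply/hasP; exists (zeta j); first by apply: map_f; rewrite mem_iota add1n ltnS.
by rewrite /= hornerXsubC zj0 subrr eqxx.
Qed.

Lemma cmod_zeta_gt0 j : (1 <= j <= d)%N -> 0 < cmod (zeta j).
Proof. by move/zeta_neq0; rewrite cmod_gt0. Qed.

Lemma cmod_zeta_mono i j : (1 <= i)%N -> (i <= j)%N -> (j <= d)%N ->
  cmod (zeta i) <= cmod (zeta j).
Proof.
move=> i_ge1; elim: j => [|j IH] ij jd; first by move: (leq_trans i_ge1 ij).
move: ij; rewrite leq_eqVlt => /predU1P[-> //|ij].
apply: (le_trans (IH ij (ltnW jd))); apply: zeta_sorted; lia.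
Qed.

Lemma w_neq0 i : (i < size w)%N -> w`_i != 0.
Proof. by rewrite size_w => id; rewrite nth_w // expf_neq0 // zeta_neq0. Qed.

Lemma w_sorted i j : (i <= j)%N -> (j < size w)%N -> cmod w`_i <= cmod w`_j.
Proof.
rewrite size_w => ij jd; rewrite !nth_w 1?(leq_ltn_trans ij) // !cmodX.
by rewrite lerXn2r ?nnegrE ?cmod_ge0 // cmod_zeta_mono.
Qed.

Hypothesis rho_min : forall k, (1 <= k < d)%N -> cmod (zeta k) < cmod (zeta k.+1) ->
  rho <= cmod (zeta k.+1) / cmod (zeta k).
Hypotheses (d_gt0 : (0 < d)%N) (rho_gt1 : 1 < rho).
Hypothesis N_large : 3 + ln (d%:R * ln 2 / ln rho) / ln 2 < N%:R.

Let rho_gt0 : 0 < rho. Proof. exact: lt_trans rho_gt1. Qed.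

Let g := iter N graeffe f.
Let corner k := [|| k == 0%N, k == d | (1 <= k <= d.-1)%N && (cmod (zeta k) < cmod (zeta k.+1))].
Let ell i := ln (cmod (zeta i.+1)).
(* [L x = - log|lc| - sum_(j > x) log|zeta j|] is the limit of [r x] as [N] grows; up to
   a constant it is the convex function [i |-> sum_(j <= i) log|zeta j|] of the statement. *)
Let L x := - ln (cmod lc) - \sum_(x <= i < d) ell i.
Let t x := - (2 ^- N * ln (cmod g`_x)).
Let r k := if g`_k == 0 then +oo%E else (t k)%:E.
Let Rr := rho ^+ (2 ^ N).
Let th := 2 ^+ d / Rr.
(* The error terms from which the constant [sch_E N d rho] of the procedure is built. *)
Let eps := - (2 ^- N * ln (1 - th)).
Let del := 2 ^- N * ln (2 ^+ d + 2 ^+ d / Rr).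
Let S x := elementary_sym w (d - x).
Let D x := cmod (top_prod w x).

Lemma cmod_coef_g x : (x <= d)%N -> cmod g`_x = cmod lc ^+ M * cmod (S x).
Proof.
move=> xd; rewrite /g iter_graeffe_f coef_scale_prod_XsubC size_w //.
by rewrite !cmodM !cmodX cmodN cmod1 expr1n mul1r.
Qed.

Lemma r_fin x : (x <= d)%N -> S x != 0 -> r x = (t x)%:E.
Proof.
move=> xd Sx0; rewrite /r ifF //; apply/negbTE; rewrite -cmod_gt0 cmod_coef_g //.
by rewrite mulr_gt0 ?exprn_gt0 ?cmod_gt0 ?lead_coef_neq0.
Qed.

Lemma error_margins : [/\ 0 < th <= 1 / 2, 0 <= eps, 0 <= del, 2 * (del + eps) < sch_E N d rho
  & sch_E N d rho + del + 4 * eps <= ln rho].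
Proof. by apply: sch_E_margins => //; apply: ln_rho_gt_of_steps. Qed.

Lemma D_gt0 x : 0 < D x.
Proof. by apply: cmod_top_prod_gt0; exact: w_neq0. Qed.

Lemma ln_D x : ln (D x) = M%:R * \sum_(x <= i < d) ell i.
Proof.
rewrite /D cmod_prod ln_prod => [|i _]; last by rewrite cmod_gt0 w_neq0.
rewrite mulr_sumr -[in RHS]size_w big_geq_mkord; apply: eq_big => i; first by rewrite inE.
have id : (i < d)%N by rewrite -size_w.
by move=> _; rewrite nth_w // cmodX lnXn ?cmod_zeta_gt0 // mulr_natl.
Qed.

Lemma t_sub_L x : (x <= d)%N -> S x != 0 ->
  t x - L x = 2 ^- N * (ln (D x) - ln (cmod (S x))).
Proof.
move=> xd Sx0; have c_gt0 : 0 < cmod lc by rewrite cmod_gt0 lead_coef_neq0.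
have cM_gt0 : 0 < cmod lc ^+ M by rewrite exprn_gt0.
have S_gt0 : 0 < cmod (S x) by rewrite cmod_gt0.
rewrite /t /L cmod_coef_g // lnM ?posrE // lnXn // ln_D.
rewrite -(mulr_natl (ln (cmod lc))) natrX.
by field; rewrite expf_neq0 // pnatr_eq0.
Qed.

Lemma w_ratio_le x : (0 < x < d)%N -> cmod (zeta x) < cmod (zeta x.+1) ->
  cmod w`_x.-1 / cmod w`_x <= Rr^-1.
Proof.
move=> /andP[x_gt0 xd] zlt; have x_mid : (1 <= x < d)%N by rewrite x_gt0.
have z0 : 0 < cmod (zeta x) by apply: cmod_zeta_gt0; lia.
have z1 : 0 < cmod (zeta x.+1) by apply: cmod_zeta_gt0; lia.
have x1d : (x.-1 < d)%N by lia.
rewrite !nth_w // prednK // !cmodX -expr_div_n /Rr -exprVn.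
rewrite lerXn2r ?nnegrE ?invr_ge0 ?divr_ge0 ?cmod_ge0 ?(ltW rho_gt0) //.
by rewrite -invf_div lef_pV2 ?posrE ?divr_gt0 // rho_min.
Qed.

Lemma S_sub_top_le x : (x <= d)%N -> corner x -> cmod (S x - top_prod w x) <= th * D x.
Proof.
move=> xd; have [/andP[th_gt0 _] _ _ _ _] := error_margins.
have th_D_ge0 : 0 <= th * D x by rewrite mulr_ge0 ?ltW ?D_gt0.
case/or3P => [x_edge|x_edge|/andP[x_mid zlt]].
- by rewrite /S -size_w elementary_sym_top_edge ?size_w ?x_edge // subrr cmod0.
- by rewrite /S -size_w elementary_sym_top_edge ?size_w ?x_edge ?orbT // subrr cmod0.
have x_mid' : (0 < x < size w)%N by rewrite size_w; lia.
have := cmod_elementary_sym_sub_top_le w_neq0 w_sorted x x_mid'; rewrite size_w -/(S x) -/(D x).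
move/le_trans; apply; have -> : th * D x = 2 ^+ d * (D x * Rr^-1) by rewrite mulrAC -mulrA.
apply: ler_wpM2l; first exact: exprn_ge0.
apply: ler_wpM2l; first exact/ltW/D_gt0.
by apply: w_ratio_le => //; lia.
Qed.

Lemma r_corner x : (x <= d)%N -> corner x -> r x = (t x)%:E /\ `|t x - L x| <= eps.
Proof.
move=> xd cx; have [th_mid _ _ _ _] := error_margins.
have top_neq0 : top_prod w x != 0 by rewrite -cmod_gt0 D_gt0.
have [Sx0 ln_close] := ln_cmod_close top_neq0 th_mid (S_sub_top_le x xd cx).
split; first exact: r_fin.
rewrite t_sub_L // normrM ger0_norm ?invr_ge0 ?exprn_ge0 // /eps -mulrN.
by rewrite ler_wpM2l ?invr_ge0 ?exprn_ge0.
Qed.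

Lemma r_off_corner x : (x <= d)%N -> ~~ corner x ->
  r x = +oo%E \/ (r x = (t x)%:E /\ L x - del <= t x).
Proof.
move=> xd _; have [Sx0|Sx0] := eqVneq (S x) 0.
  left; rewrite /r ifT //; rewrite -[_ == 0]negbK -cmod_gt0 cmod_coef_g //.
  by rewrite Sx0 cmod0 mulr0 ltxx.
right; split; first exact: r_fin.
have Rr_gt0 : 0 < Rr by rewrite exprn_gt0.
have two_d : 0 < 2 ^+ d :> R by rewrite exprn_gt0.
have K_gt0 : 0 < 2 ^+ d + 2 ^+ d / Rr by rewrite addr_gt0 ?divr_gt0.
have S_le : cmod (S x) <= (2 ^+ d + 2 ^+ d / Rr) * D x.
  have := cmod_elementary_sym_le w_neq0 w_sorted x; rewrite size_w => /(_ xd).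
  move/le_trans; apply; apply: ler_wpM2r; first exact/ltW/D_gt0.
  by rewrite lerDl divr_ge0 ?ltW.
have : ln (cmod (S x)) <= ln (2 ^+ d + 2 ^+ d / Rr) + ln (D x).
  by rewrite -lnM ?posrE ?D_gt0 // ler_ln ?posrE ?mulr_gt0 ?D_gt0 ?cmod_gt0.
have Qi_ge0 : 0 <= 2 ^- N :> R by rewrite invr_ge0 exprn_ge0.
move/(ler_wpM2l Qi_ge0); have := t_sub_L x xd Sx0; rewrite /del; lra.
Qed.

Lemma ell_noncorner y : (0 < y < d)%N -> ~~ corner y -> ell y.-1 = ell y.
Proof.
move=> /andP[y_gt0 yd]; have yd' : (y <= d.-1)%N by lia.
rewrite /corner (gtn_eqF y_gt0) (ltn_eqF yd) y_gt0 yd' /= -leNgt => zge.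
have zle : cmod (zeta y) <= cmod (zeta y.+1) by apply: zeta_sorted; rewrite y_gt0.
have zeq : cmod (zeta y) = cmod (zeta y.+1) by apply/eqP; rewrite eq_le zle zge.
by rewrite /ell prednK // zeq.
Qed.

Lemma ell_consecutive a c i : consecutive corner a c -> (c <= d)%N -> (a <= i < c)%N ->
  ell i = ell a.
Proof.
move=> [_ _ ac gap] cd; elim: i => [|i IH] /andP[ai ic]; first by case: a ai {ac gap}.
move: ai; rewrite leq_eqVlt => /predU1P[<- //|ai].
rewrite -IH; last by rewrite -ltnS ai ltnW.
by rewrite -(ell_noncorner i.+1) ?gap ?ai //; lia.
Qed.

Lemma L_affine a c x : consecutive corner a c -> (c <= d)%N -> (a <= x <= c)%N ->
  L x = L a + (x - a)%:R * ell a.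
Proof.
move=> adj cd /andP[ax xc].
have ell_a : \sum_(a <= i < x) ell i = (x - a)%:R * ell a.
  rewrite mulr_natl -sumr_const_nat; apply: eq_big_nat => i /andP[ai ix].
  by apply: ell_consecutive adj cd _; rewrite ai (leq_trans ix xc).
rewrite /L (big_cat_nat ax (leq_trans xc cd)) /= ell_a; lra.
Qed.

Lemma slope_jump b a c : consecutive corner b a -> consecutive corner a c -> (c <= d)%N ->
  ell b + ln rho <= ell a.
Proof.
move=> adj_ba [ca _ ac _] cd; have [_ _ ba _] := adj_ba.
have [a_gt0 ad] : (0 < a)%N /\ (a < d)%N by lia.
have ell_b : ell a.-1 = ell b by apply: ell_consecutive adj_ba _ _; lia.
have zlt : cmod (zeta a) < cmod (zeta a.+1).
  by move: ca; rewrite /corner (gtn_eqF a_gt0) (ltn_eqF ad) => /andP[].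
have [za zb] : 0 < cmod (zeta a) /\ 0 < cmod (zeta a.+1) by split; apply: cmod_zeta_gt0; lia.
have : ln rho <= ln (cmod (zeta a.+1) / cmod (zeta a)).
  by rewrite ler_ln ?posrE ?divr_gt0 ?rho_min ?a_gt0 ?ad.
rewrite lnM ?posrE ?invr_gt0 // lnV ?posrE // -ell_b /ell prednK //; lra.
Qed.

Lemma graeffe_hull_corners :
  strict_convex_hull N d r rho = [seq k <- iota 0 d.+1 | corner k].
Proof.
have [_ eps_ge0 del_ge0 E_gt E_le] := error_margins.
apply: (sch_foldl_corners _ _ _ _ _ L t ell eps del (ln rho)) => //.
- by rewrite /corner eqxx orbT.
- exact: r_corner.
- exact: r_off_corner.
- exact: L_affine.
- exact: slope_jump.
Qed.

End GraeffeHull.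

Theorem mainTheorem1 (R : realType) (d : nat) (f : {poly R[i]})
    (zeta : nat -> R[i]) (rho : R) (N : nat) :
  size f = d.+1 ->
  f.[0] != 0 ->
  f = lead_coef f *: \prod_(1 <= k < d.+1) ('X - (zeta k)%:P) ->
  (forall k, (1 <= k < d)%N -> cmod (zeta k) <= cmod (zeta k.+1)) ->
  (exists k l, [/\ (1 <= k <= d)%N, (1 <= l <= d)%N & cmod (zeta k) != cmod (zeta l)]) ->
  (exists2 k, (1 <= k < d)%N /\ cmod (zeta k) < cmod (zeta k.+1)
            & rho = cmod (zeta k.+1) / cmod (zeta k)) ->
  (forall k, (1 <= k < d)%N -> cmod (zeta k) < cmod (zeta k.+1) ->
             rho <= cmod (zeta k.+1) / cmod (zeta k)) ->
  (0 < N)%N ->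
  3 + ln (d%:R * ln 2 / ln rho) / ln 2 < N%:R ->
  let g := iter N graeffe f in
  let r := fun k : nat =>
    if g`_k == 0 then +oo%E else (- (2 ^- N * ln (cmod g`_k)))%:E in
  strict_convex_hull N d r rho =
    [seq k <- iota 0 d.+1 |
      [|| k == 0%N, k == d
        | (1 <= k <= d.-1)%N && (cmod (zeta k) < cmod (zeta k.+1))]].
Proof.
(* Not all moduli being equal and [0 < N] both follow from the hypotheses on [rho]. *)
move=> size_f f0_neq0 f_prod zeta_sorted _ [k [k_mid zlt] rho_ratio] rho_min _ N_large.
have d_gt0 : (0 < d)%N by lia.
have rho_gt1 : 1 < rho.
  have zk_gt0 := @cmod_zeta_gt0 R d f zeta f0_neq0 f_prod k (_ : 1 <= k <= d)%N.
  by rewrite rho_ratio ltr_pdivlMr ?mul1r ?zk_gt0 //; lia.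
by apply: graeffe_hull_corners.
Qed.
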